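(* Let $\gamma\in(0,1)$, $\mu\in(0,\infty)\setminus\{1\}$. Let $g$ be a concave traveling wave with compact nonempty support, normalized so that its support is $[L,0]$. Let $s=\sup\{\xi:\sup_x\Phi_\xi[g](x)\ge\gamma\}$, and let $d$ be as in the context. Then for all $x\ge L$: $$\Phi_s[g](x)=\begin{cases}1-\gamma-x-\mu(s-x)_+ & \text{if } x>0,\\ 1-\gamma+g(x)-\mu(s-x)_+ & \text{if } d\le x\le 0,\\ 1-\gamma+g(d)-(d-x)-\mu(s-x)_+ & \text{if } x<d.\end{cases}$$
   Context: Let $\pi(x)=x$ if $x\ge0$ and $\pi(x)=-\infty$ otherwise. Write $x_+=\max(x,0)$ and use $\sup\emptyset=-\infty$. Define $\Phi_\xi[h](x)=1-\gamma-\mu(\xi-x)_++\sup_y(h(y)-|x-y|)$. The dynamics is defined for $n\ge1$ by: - $p_n(x)=\pi[1-\gamma+\sup_y(g_{n-1}(y)-\min(1,\mu)(x-y)_+)]$; - $s_n=\sup\{x:p_n(x)\ge\gamma\}$; - $g_n=\pi\circ\Phi_{s_n}[g_{n-1}]$. A traveling wave with speed $v$ is a $g$ with $g_0=g\Rightarrow g_n(x)=g(x-nv)$ for all $n,x$. The support is $\{g\ge0\}$ and $L=\inf\{x:g(x)>0\}$. Definition of $d$: if the a.e. derivative $g'$ satisfies $g'>1$ somewhere on $(L,0)$, then $d<0$ is the unique point with $g'>1$ on $(L,d)$ and $g'\le1$ on $(d,\infty)$. Otherwise $d:=L$. *)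

(* functions R -> \bar R (values in R ∪ {-oo}). *)
From HB Require Import structures.
From mathcomp Require Import all_boot all_order all_algebra.
From mathcomp Require Import all_classical all_reals all_analysis.
Set Implicit Arguments. Unset Strict Implicit. Unset Printing Implicit Defensive.
Import Order.TTheory GRing.Theory Num.Theory.
Local Open Scope classical_set_scope.
Local Open Scope ring_scope.

Section Defs.
Variable R : realType.

Definition piE (e : \bar R) : \bar R := if (0 <= e)%E then e else -oo%E.

(* Phi_xi[h](x) = 1 - gamma - mu (xi - x)_+ + sup_y (h y - |x - y|) ;
   xi is allowed to be an extended real (the s_n may a priori be infinite). *)
Definition Phi (gamma mu : R) (xi : \bar R) (h : R -> \bar R) (x : R) : \bar R :=
  (((1 - gamma)%:E - mu%:E * maxe (xi - x%:E) 0%E)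
   + ereal_sup [set (h y - `|x - y|%:E)%E | y in [set: R]])%E.

Definition pfun (gamma mu : R) (h : R -> \bar R) (x : R) : \bar R :=
  piE ((1 - gamma)%:E
       + ereal_sup [set (h y - (Num.min 1 mu * Num.max (x - y) 0)%:E)%E
                   | y in [set: R]])%E.

Definition s_of (gamma mu : R) (h : R -> \bar R) : \bar R :=
  ereal_sup [set x%:E | x in [set x : R | (gamma%:E <= pfun gamma mu h x)%E]].

Definition step (gamma mu : R) (h : R -> \bar R) : R -> \bar R :=
  fun x => piE (Phi gamma mu (s_of gamma mu h) h x).

Definition gseq (gamma mu : R) (g : R -> \bar R) (n : nat) : R -> \bar R :=
  iter n (step gamma mu) g.

Definition traveling_wave (gamma mu : R) (g : R -> \bar R) (v : R) : Prop :=
  forall (n : nat) (x : R), gseq gamma mu g n x = g (x - n%:R * v).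

Definition concaveE (g : R -> \bar R) : Prop :=
  forall (x y t : R), (0 < t < 1)%R ->
    (t%:E * g x + (1 - t)%:E * g y <= g (t * x + (1 - t) * y)%R)%E.

Definition s_crit (gamma mu : R) (g : R -> \bar R) : \bar R :=
  ereal_sup [set xi%:E | xi in
    [set xi : R | (gamma%:E <= ereal_sup (range (Phi gamma mu xi%:E g)))%E]].

(* the point d of the context, g' being the (a.e.) derivative of g,
   taken at the points where the real function fine \o g is differentiable *)
Definition is_d (g : R -> \bar R) (L d : R) : Prop :=
  let gr := fun x => fine (g x) in
  ((exists x, L < x < 0 /\ derivable gr x 1 /\ 1 < derive1 gr x) ->
     [/\ L < d < 0,
         (forall x, L < x < d -> derivable gr x 1 -> 1 < derive1 gr x) &
         (forall x, d < x -> derivable gr x 1 -> derive1 gr x <= 1)])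
  /\ (~ (exists x, L < x < 0 /\ derivable gr x 1 /\ 1 < derive1 gr x) -> d = L).

End Defs.

From Pilot Require Import Defs.
From HB Require Import structures.
From mathcomp Require Import all_boot all_order all_algebra.
From mathcomp Require Import all_classical all_reals all_analysis.
From mathcomp Require Import ring lra.
Import Order.TTheory GRing.Theory Num.Theory numFieldNormedType.Exports.
Local Open Scope classical_set_scope.
Local Open Scope ring_scope.

(* Being a traveling wave, g is pi o Phi_{s_1}[g] up to a shift, and
   Phi_xi[h] z' <= Phi_xi[h] z + |z - z'| (times 1 + mu when z < z').
   Hence g is finite on its support [L, 0], g 0 = 0 and
   g y' <= g y + (y - y') for y' <= y.  Concavity and the definition of d give
   chord slopes <= 1 to the right of d and >= 1 to the left of d: a chord of
   the wrong slope would produce, by a nested-interval argument, a point of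
   differentiability with the wrong derivative.  So sup_y (g y - |x - y|) is
   attained at 0 for x > 0, at x for d <= x <= 0 and at d for x < d. *)

Definition slope {R : realType} (G : R -> R) (x y : R) : R := (G y - G x) / (y - x).

Section ConcaveChords.
Context {R : realType} {G : R -> R} {a b : R}.
Hypothesis concave_chord : forall {x y z}, a <= x -> x < y -> y < z -> z <= b ->
  G x * (z - y) + G z * (y - x) <= G y * (z - x).

Lemma slope_nonincr_r [x y z] : a <= x -> x < y -> y <= z -> z <= b ->
  slope G x z <= slope G x y.
Proof.
move=> ax xy; rewrite le_eqVlt => /orP[/eqP <- //|yz] zb.
have yx0 : 0 < y - x by rewrite subr_gt0.
have zx0 : 0 < z - x by rewrite subr_gt0 (lt_trans xy).
have := concave_chord ax xy yz zb; rewrite /slope.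
by rewrite ler_pdivrMr // mulrAC ler_pdivlMr //; nra.
Qed.

Lemma slope_nonincr_l [x y z] : a <= x -> x <= y -> y < z -> z <= b ->
  slope G y z <= slope G x z.
Proof.
move=> ax; rewrite le_eqVlt => /orP[/eqP <- //|xy] yz zb.
have zy0 : 0 < z - y by rewrite subr_gt0.
have zx0 : 0 < z - x by rewrite subr_gt0 (lt_trans xy).
have := concave_chord ax xy yz zb; rewrite /slope.
by rewrite ler_pdivrMr // mulrAC ler_pdivlMr //; nra.
Qed.

Lemma slope_adjacent [x y z] : a <= x -> x < y -> y < z -> z <= b ->
  slope G y z <= slope G x y.
Proof.
move=> ax xy yz zb; apply: (le_trans (slope_nonincr_l ax (ltW xy) yz zb)).
exact: slope_nonincr_r ax xy (ltW yz) zb.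
Qed.

(* Bounds the jump between the one-sided derivatives at every point of the
   middle three fifths of [[x, y]]. *)
Definition inner_gap x y :=
  slope G x (x + (y - x) / 5) - slope G (y - (y - x) / 5) y.

Lemma inner_gap_le_outer x y h : 0 < h -> a <= x - h -> x < y -> y + h <= b ->
  inner_gap x y <= slope G (x - h) x - slope G y (y + h).
Proof.
move=> h0 axh xy yhb; set r := (y - x) / 5.
have r0 : 0 < r by rewrite divr_gt0 // subr_gt0.
have yE : y = x + 5 * r by rewrite /r; field.
have left : slope G x (x + r) <= slope G (x - h) x.
  by apply: slope_adjacent; lra.
have right : slope G y (y + h) <= slope G (y - r) y.
  by apply: slope_adjacent; lra.
rewrite /inner_gap -/r; lra.
Qed.

(* With s_k the slope on the k-th fifth of [[x, y]], the inner gaps of the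
   second and of the fourth fifth are at most s_1 - s_3 and s_3 - s_5, whose sum
   is inner_gap x y; one of them is thus at most half of it. *)
Definition fifths (p : R * R) : R * R :=
  let: (x, y) := p in let r := (y - x) / 5 in
  if slope G x (x + r) - slope G (x + 2 * r) (x + 3 * r) <= inner_gap x y / 2
  then (x + r, x + 2 * r) else (x + 3 * r, x + 4 * r).

Lemma fifths_spec [x y] : a <= x -> x < y -> y <= b ->
  let p := fifths (x, y) in
  [/\ x + (y - x) / 5 <= p.1, p.1 < p.2, p.2 <= y - (y - x) / 5 &
      inner_gap p.1 p.2 <= inner_gap x y / 2].
Proof.
move=> ax xy yb; rewrite /fifths; set r := (y - x) / 5.
have r0 : 0 < r by rewrite divr_gt0 // subr_gt0.
have yE : y = x + 5 * r by rewrite /r; field.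
have gapE : inner_gap x y = slope G x (x + r) - slope G (x + 4 * r) (x + 5 * r).
  by rewrite /inner_gap -/r -yE; congr (_ - slope G _ _); rewrite {1}yE; ring.
case: ifP => [small|/negbT]; last rewrite -ltNge => big; rewrite /=.
- have := @inner_gap_le_outer (x + r) (x + 2 * r) r r0.
  rewrite addrK (_ : x + 2 * r + r = x + 3 * r); last by ring.
  move=> /(_ ax); split; lra.
- have := @inner_gap_le_outer (x + 3 * r) (x + 4 * r) r r0.
  rewrite (_ : x + 3 * r - r = x + 2 * r); last by ring.
  rewrite (_ : x + 4 * r + r = x + 5 * r); last by ring.
  move=> /(_ ltac:(lra) ltac:(lra) ltac:(lra)); split; lra.
Qed.

Section NestedBrackets.
Context {x0 y0 : R}.
Hypotheses (ax0 : a <= x0) (x0y0 : x0 < y0) (y0b : y0 <= b).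

Definition bracket n := iter n fifths (x0, y0).

Local Notation lo n := (bracket n).1.
Local Notation hi n := (bracket n).2.
Local Notation fifth n := ((hi n - lo n) / 5).

Lemma bracket_inv n : [/\ a <= lo n, lo n < hi n, hi n <= b &
  inner_gap (lo n) (hi n) * 2 ^+ n <= inner_gap x0 y0].
Proof.
elim: n => [|n [an lohi hib gapn]]; first by rewrite expr0 mulr1.
rewrite /bracket iterS -/(bracket n).
move: an lohi hib gapn; case: (bracket n) => x y /= ax xy yb gapn.
have [+ + + halved] := fifths_spec ax xy yb.
have r0 : 0 < (y - x) / 5 by rewrite divr_gt0 // subr_gt0.
have p2 : 0 < 2 ^+ n :> R by rewrite exprn_gt0.
rewrite exprS; split; [lra | lra | lra | nra].
Qed.

Lemma bracket_step n : lo n + fifth n <= lo n.+1 /\ hi n.+1 <= hi n - fifth n.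
Proof.
rewrite /bracket iterS -/(bracket n).
have [+ + + _] := bracket_inv n; case: (bracket n) => x y /= ax xy yb.
by have [] := fifths_spec ax xy yb.
Qed.

Lemma bracket_nested [n m] : (n <= m)%N -> lo n <= lo m /\ hi m <= hi n.
Proof.
elim: m => [|m IH]; first by rewrite leqn0 => /eqP ->.
rewrite leq_eqVlt => /orP[/eqP -> //|]; rewrite ltnS => /IH [lon him].
have [step_lo step_hi] := bracket_step m; have [_ lohi _ _] := bracket_inv m.
have r0 : 0 < fifth m by rewrite divr_gt0 // subr_gt0.
split; lra.
Qed.

Definition nested_point := sup (range (fun n => lo n)).

Local Notation w := nested_point.

Lemma nested_point_bounds n : lo n + fifth n <= w /\ w <= hi n - fifth n.
Proof.
have [step_lo step_hi] := bracket_step n.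
have ub : ubound (range (fun n => lo n)) (hi n.+1).
  move=> _ [m _ <-].
  have [lom _] := bracket_nested (leq_maxl m n.+1).
  have [_ hin] := bracket_nested (leq_maxr m n.+1).
  have [_ lohi _ _] := bracket_inv (maxn m n.+1); lra.
have ne : range (fun n => lo n) !=set0 by exists (lo 0), 0%N.
split; last by apply: le_trans step_hi; exact: ge_sup.
apply: le_trans step_lo _; apply: sup_upper_bound; last by exists n.+1.
by split => //; exists (hi n.+1).
Qed.

Lemma nested_point_in : x0 < w < y0.
Proof.
have [] := nested_point_bounds 0; rewrite /=.
have r0 : 0 < (y0 - x0) / 5 by rewrite divr_gt0 // subr_gt0.
by move=> ? ?; apply/andP; split; lra.
Qed.

Lemma slope_gap_nested_point n :
  slope G (lo n) w - slope G w (hi n) <= inner_gap (lo n) (hi n).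
Proof.
have [wlo whi] := nested_point_bounds n; have [an lohi hib _] := bracket_inv n.
move: wlo whi an lohi hib; case: (bracket n) => x y /= wlo whi ax xy yb; set r := (y - x) / 5 in wlo whi *.
have r0 : 0 < r by rewrite /r divr_gt0 // subr_gt0.
have left : slope G x w <= slope G x (x + r) by apply: slope_nonincr_r; lra.
have right : slope G (y - r) y <= slope G w y by apply: slope_nonincr_l; lra.
rewrite /inner_gap -/r; lra.
Qed.

Lemma inner_gap_vanishes [e] : 0 < e -> exists n, inner_gap (lo n) (hi n) < e.
Proof.
move=> e0; have [m hm] : exists m : nat, inner_gap x0 y0 / e < m%:R.
  by exists (Num.truncn (inner_gap x0 y0 / e)).+1; exact: truncnS_gt.
exists m; have [_ _ _ gapm] := bracket_inv m.
have m2 : (m%:R : R) <= 2 ^+ m by rewrite -natrX ler_nat ltnW // ltn_expl.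
have p2 : 0 < 2 ^+ m :> R by rewrite exprn_gt0.
rewrite ltr_pdivrMr // in hm.
rewrite -(ltr_pM2r p2); apply: (le_lt_trans gapm); apply: (lt_le_trans hm).
by rewrite mulrC ler_pM2l.
Qed.

Definition right_slope_sup := sup [set slope G w z | z in [set z | w < z <= b]].

Lemma slope_le_right_slope_sup [z] : w < z -> z <= b -> slope G w z <= right_slope_sup.
Proof.
move=> wz zb; apply: sup_upper_bound; last by exists z => //=; apply/andP.
split; first by exists (slope G w z), z => //=; apply/andP.
have /andP[x0w _] := nested_point_in.
exists (slope G x0 w) => _ [t /andP[wt tb] <-]; exact: slope_adjacent ax0 x0w wt tb.
Qed.

Lemma right_slope_sup_le [u] : a <= u -> u < w -> right_slope_sup <= slope G u w.
Proof.
move=> au uw; have /andP[_ wy0] := nested_point_in.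
apply: ge_sup; first by exists (slope G w y0), y0 => //=; rewrite wy0 y0b.
by move=> _ [t /andP[wt tb] <-]; exact: slope_adjacent au uw wt tb.
Qed.

(* A difference quotient at w with increment smaller than the distance from w
   to the ends of the n-th bracket lies between slope G w (hi n) and
   slope G (lo n) w, and so does right_slope_sup. *)
Lemma difference_quotient_cvg :
  (fun h : R => h^-1 *: (G (h + w) - G w)) @ 0^' --> right_slope_sup.
Proof.
apply/cvgrPdist_lt => e e0; have [n gapn] := inner_gap_vanishes e0.
have gapw := slope_gap_nested_point n.
have [an lohi hib _] := bracket_inv n; have [wlo whi] := nested_point_bounds n.
move: gapn gapw an lohi hib wlo whi; case: (bracket n) => x y /= gapn gapw ax xy yb.
have r0 : 0 < (y - x) / 5 by rewrite divr_gt0 // subr_gt0.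
move=> wlo whi; have xw : x < w by lra.
have wy : w < y by lra.
have upper := slope_le_right_slope_sup wy yb.
have lower := right_slope_sup_le ax xw.
have d0 : 0 < Num.min (w - x) (y - w) by rewrite lt_min !subr_gt0 xw wy.
apply: filterS2 (dnbhs0_lt d0) (nbhs_dnbhs_neq 0) => h.
rewrite lt_min => /andP[hwx hyw] h0.
have [hpos|hneg] := ltP 0 h.
- rewrite gtr0_norm // in hwx hyw.
  have -> : h^-1 *: (G (h + w) - G w) = slope G w (h + w).
    by rewrite /slope addrK mulrC.
  have q1 : slope G w y <= slope G w (h + w) by apply: slope_nonincr_r; lra.
  have q2 : slope G w (h + w) <= slope G x w by apply: slope_adjacent; lra.
  rewrite ltr_norml; apply/andP; split; lra.
- have hn0 : h < 0 by rewrite lt_neqAle h0 hneg.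
  rewrite ltr0_norm // in hwx hyw.
  have -> : h^-1 *: (G (h + w) - G w) = slope G (h + w) w.
    rewrite /slope (_ : w - (h + w) = - h); last by ring.
    by rewrite invrN mulrN -mulNr opprB mulrC.
  have q1 : slope G w y <= slope G (h + w) w by apply: slope_adjacent; lra.
  have q2 : slope G (h + w) w <= slope G x w by apply: slope_nonincr_l; lra.
  rewrite ltr_norml; apply/andP; split; lra.
Qed.

Lemma concave_derivable_between : exists c, [/\ x0 < c < y0, derivable G c 1,
  (forall u, a <= u -> u < c -> derive1 G c <= slope G u c) &
  (forall z, c < z -> z <= b -> slope G c z <= derive1 G c)].
Proof.
have quotE : (fun h : R => h^-1 *: ((G \o shift w) (h *: (1 : R)) - G w))
           = (fun h : R => h^-1 *: (G (h + w) - G w)).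
  by apply: funext => h /=; rewrite /GRing.scale /= mulr1.
have dE : derive1 G w = right_slope_sup.
  by apply: cvg_lim => //; exact: difference_quotient_cvg.
exists w; split; first exact: nested_point_in.
- by rewrite /derivable quotE; apply: cvgP difference_quotient_cvg.
- by move=> u au uw; rewrite dE; exact: right_slope_sup_le.
- by move=> z wz zb; rewrite dE; exact: slope_le_right_slope_sup.
Qed.

End NestedBrackets.
End ConcaveChords.

Section PhiBounds.
Context {R : realType} (gamma mu : R).
Hypothesis mu_gt0 : 0 < mu.
Local Open Scope ereal_scope.

Definition lip_envelope (h : R -> \bar R) (x : R) : \bar R :=
  ereal_sup [set h y - `|x - y|%:E | y in [set: R]].

Definition Phi_head (xi : \bar R) (x : R) : \bar R :=
  (1 - gamma)%:E - mu%:E * maxe (xi - x%:E) 0.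

Lemma PhiE xi h x : Phi gamma mu xi h x = Phi_head xi x + lip_envelope h x.
Proof. by []. Qed.

Lemma lip_envelope_le h z z' : lip_envelope h z' <= lip_envelope h z + `|z - z'|%:E.
Proof.
apply: ge_ereal_sup => _ [y _ <-].
have tri := ler_distD z' z y.
case hy: (h y) => [r| |]; last by rewrite addNye leNye.
- have ub : (r - `|z - y|)%:E <= lip_envelope h z.
    by apply: ereal_sup_ubound; exists y => //; rewrite hy.
  apply: le_trans (leeD2r _ ub); rewrite -!EFinB -EFinD lee_fin; lra.
- have -> : lip_envelope h z = +oo.
    apply/eqP; rewrite -leye_eq (_ : +oo = h y - `|z - y|%:E); last by rewrite hy.
    by apply: ereal_sup_ubound; exists y.
  by rewrite addye // leey.
Qed.

Lemma Phi_head_nondecr xi z z' : (z' <= z)%R -> Phi_head xi z' <= Phi_head xi z.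
Proof.
move=> zz; apply: leeB => //; apply: lee_wpmul2l; first by rewrite lee_fin ltW.
by apply: le_max2 => //; apply: leeB; rewrite // lee_fin.
Qed.

Lemma Phi_head_lipschitz xi z z' : (z' <= z)%R ->
  Phi_head xi z <= Phi_head xi z' + (mu * (z - z'))%:E.
Proof.
move=> zz; rewrite /Phi_head; case: xi => [r| |].
- rewrite -!EFinB -!EFin_max -!EFinM -!EFinB -EFinD lee_fin.
  have lip : (Num.max (r - z') 0 <= Num.max (r - z) 0 + (z - z'))%R.
    by rewrite !maxEle; case: ifP => _; case: ifP => /=; lra.
  by have := ler_wpM2l (ltW mu_gt0) lip; rewrite mulrDr; lra.
- rewrite /= (_ : maxe _ _ = +oo) // mulry gtr0_sg // mul1e /=.
  by rewrite addeNy leNye.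
- rewrite /= (_ : maxe _ _ = 0) ?mule0 ?sube0; last by rewrite maxEle leNye.
  by rewrite -EFinD lee_fin lerDl mulr_ge0 ?subr_ge0 // ltW.
Qed.

Lemma Phi_le_left xi h z z' : (z' <= z)%R ->
  Phi gamma mu xi h z' <= Phi gamma mu xi h z + (z - z')%:E.
Proof.
move=> zz; rewrite !PhiE; have head := Phi_head_nondecr xi z z' zz.
move: (Phi_head xi z) (Phi_head xi z') head => Hz Hz' head.
rewrite -addeA; apply: leeD => //.
by have := lip_envelope_le h z z'; rewrite ger0_norm // subr_ge0.
Qed.

Lemma Phi_le_right xi h z z' : (z <= z')%R ->
  Phi gamma mu xi h z' <= Phi gamma mu xi h z + ((1 + mu) * (z' - z))%:E.
Proof.
move=> zz; rewrite !PhiE; have head := Phi_head_lipschitz xi z' z zz.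
move: (Phi_head xi z) (Phi_head xi z') head => Hz Hz' head.
rewrite mulrDl mul1r EFinD (addeC (z' - z)%:E) addeACA; apply: leeD => //.
by have := lip_envelope_le h z z'; rewrite ler0_norm ?subr_le0 // opprB.
Qed.

Lemma Phi_head_addE xi x c :
  Phi_head xi x + c%:E = (1 - gamma + c)%:E - mu%:E * maxe (xi - x%:E) 0.
Proof.
rewrite /Phi_head; case: (mu%:E * _) => [r| |] /=.
- by rewrite -!EFinD; congr EFin; ring.
- by rewrite !addeNy.
- by rewrite !addey.
Qed.

End PhiBounds.

Section TravelingWave.
Variables (R : realType) (gamma mu : R) (g : R -> \bar R) (L d v : R).
Hypotheses (mu_gt0 : 0 < mu) (L_le0 : L <= 0).
Hypothesis wave : forall x, step gamma mu g x = g (x - v).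
Hypothesis g_concave : concaveE g.
Hypothesis g_support : forall x, (0 <= g x)%E <-> L <= x <= 0.
Hypothesis d_spec : is_d g L d.

Local Notation Phi1 := (Phi gamma mu (s_of gamma mu g) g).

Lemma g_Phi1 y : g y = Defs.piE (Phi1 (y + v)).
Proof. by rewrite -[y in g y](addrK v) -wave. Qed.

Lemma g_in y : L <= y <= 0 -> g y = Phi1 (y + v).
Proof. by move=> /g_support; rewrite g_Phi1 /Defs.piE; case: ifP. Qed.

Lemma Phi1_lt0_out y : ~ (L <= y <= 0) -> (Phi1 (y + v) < 0)%E.
Proof.
move=> yout; rewrite ltNge; apply/negP => Phi0; apply/yout/g_support.
by rewrite g_Phi1 /Defs.piE Phi0.
Qed.

Lemma g_out y : ~ (L <= y <= 0) -> g y = -oo%E.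
Proof. by move=> /Phi1_lt0_out; rewrite g_Phi1 /Defs.piE ltNge => /negbTE ->. Qed.

Lemma g_fin_num y : L <= y <= 0 -> g y \is a fin_num.
Proof.
move=> yin; have g0 : (0 <= g y)%E by exact/g_support.
rewrite fin_numE gt_eqF ?(lt_le_trans _ g0) ?ltNy0 //=.
apply/negP => /eqP gy; have /andP[_ y0] := yin.
suff : (0 <= g 1)%E by move/g_support => /andP[_]; rewrite ler10.
have := Phi_le_left gamma mu mu_gt0 (s_of gamma mu g) g (1 + v) (y + v).
rewrite lerD2r (le_trans y0 ler01) => /(_ isT).
rewrite -g_in // gy g_Phi1; case: (Phi1 (1 + v)) => [r| |] //.
by rewrite /Defs.piE le0y.
Qed.

Definition G y := fine (g y).

Lemma gE y : L <= y <= 0 -> g y = (G y)%:E.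
Proof. by move=> /g_fin_num /fineK. Qed.

Lemma G_ge0 y : L <= y <= 0 -> 0 <= G y.
Proof. by move=> yin; rewrite -lee_fin -gE //; exact/g_support. Qed.

Lemma G_le_left [y y'] : L <= y' -> y' <= y -> y <= 0 -> G y' <= G y + (y - y').
Proof.
move=> Ly' y'y y0; have Ly := le_trans Ly' y'y; have y'0 := le_trans y'y y0.
have := Phi_le_left gamma mu mu_gt0 (s_of gamma mu g) g (y + v) (y' + v).
rewrite lerD2r => /(_ y'y); rewrite -!g_in ?Ly ?Ly' ?y0 ?y'0 //.
rewrite !gE ?Ly ?Ly' ?y0 ?y'0 // -EFinD lee_fin.
by rewrite (_ : y + v - (y' + v) = y - y') //; ring.
Qed.

Lemma G_le_right [y y'] : L <= y -> y <= y' -> y' <= 0 ->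
  G y' <= G y + (1 + mu) * (y' - y).
Proof.
move=> Ly yy' y'0; have Ly' := le_trans Ly yy'; have y0 := le_trans yy' y'0.
have := Phi_le_right gamma mu mu_gt0 (s_of gamma mu g) g (y + v) (y' + v).
rewrite lerD2r => /(_ yy'); rewrite -!g_in ?Ly ?Ly' ?y0 ?y'0 //.
rewrite !gE ?Ly ?Ly' ?y0 ?y'0 // -EFinD lee_fin.
by rewrite (_ : y' + v - (y + v) = y' - y) //; ring.
Qed.

Lemma G0 : G 0 = 0.
Proof.
have L0 : L <= 0 <= (0 : R) by rewrite L_le0 lexx.
apply/eqP; rewrite eq_le G_ge0 // andbT leNgt; apply/negP => G0_gt0.
have out : (Phi1 (G 0 + v) < 0)%E.
  by apply: Phi1_lt0_out => /andP[_]; rewrite leNgt G0_gt0.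
have := Phi_le_left gamma mu mu_gt0 (s_of gamma mu g) g (G 0 + v) (0 + v).
rewrite lerD2r (ltW G0_gt0) -g_in // gE // (_ : G 0 + v - (0 + v) = G 0); last by ring.
move=> /(_ isT); apply/negP; rewrite -ltNge -[X in (_ < X)%E]add0e.
by rewrite lteD2rE.
Qed.

Lemma G_le_opp [y] : L <= y -> y <= 0 -> G y <= - y.
Proof. by move=> Ly y0; have := G_le_left Ly y0 (lexx 0); rewrite G0 add0r sub0r. Qed.

Lemma G_concave_chord x y z : L <= x -> x < y -> y < z -> z <= 0 ->
  G x * (z - y) + G z * (y - x) <= G y * (z - x).
Proof.
move=> Lx xy yz z0; have zx0 : 0 < z - x by rewrite subr_gt0 (lt_trans xy).
have inI t : x <= t <= z -> L <= t <= 0.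
  by move=> /andP[xt tz]; rewrite (le_trans Lx xt) (le_trans tz z0).
set t := (z - y) / (z - x).
have t0 : 0 < t by rewrite /t divr_gt0 // subr_gt0.
have t1 : t < 1 by rewrite /t ltr_pdivrMr // mul1r; lra.
have := g_concave x z t; rewrite t0 t1 => /(_ isT).
rewrite (_ : t * x + (1 - t) * z = y); last by rewrite /t; field; lra.
rewrite !gE ?inI ?lexx ?(ltW xy) ?(ltW yz) ?(ltW (lt_trans xy yz)) //.
rewrite -!EFinM -EFinD lee_fin => chord.
have -> : G x * (z - y) + G z * (y - x) = (t * G x + (1 - t) * G z) * (z - x).
  by rewrite /t; field; lra.
by rewrite ler_pM2r.
Qed.

Lemma steep_left_of_d : L < d ->
  d < 0 /\ forall x, L < x < d -> derivable G x 1 -> 1 < derive1 G x.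
Proof.
move=> Ld; have [steep flat] := d_spec.
have [ex|nex] := pselect (exists x, L < x < 0 /\ derivable G x 1 /\ 1 < derive1 G x).
  by have [/andP[_ d0] steep_left _] := steep ex.
by move: Ld; rewrite (flat nex) ltxx.
Qed.

Lemma G_slope_le1 [x y] : L <= x -> d <= x -> x < y -> y <= 0 -> G y - G x <= y - x.
Proof.
move=> Lx dx xy y0; rewrite leNgt; apply/negP => steep_xy.
set D := G y - G x - (y - x).
have D0 : 0 < D by rewrite /D subr_gt0.
set t := Num.min ((y - x) / 2) (D / (2 * mu)).
have t0 : 0 < t by rewrite lt_min !divr_gt0 ?subr_gt0 ?mulr_gt0.
have ty : t <= (y - x) / 2 by rewrite ge_min lexx.
have tD : mu * t <= D / 2.
  have : t <= D / (2 * mu) by rewrite ge_min lexx orbT.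
  by rewrite ler_pdivlMr ?mulr_gt0 // => ?; nra.
have mut0 : 0 < mu * t by rewrite mulr_gt0.
have x'y : 1 < slope G (x + t) y.
  have := @G_le_right x (x + t) Lx ltac:(lra) ltac:(lra).
  rewrite (_ : (1 + mu) * (x + t - x) = t + mu * t); last by ring.
  have DE : D = G y - G x - (y - x) by [].
  by rewrite /slope ltr_pdivlMr ?mul1r; lra.
have xx' : x < x + t by rewrite ltrDl.
have x'0 : x + t <= 0 by lra.
have [w [/andP[xw wx'] Gw _ right_slopes]] :=
  concave_derivable_between G_concave_chord Lx xx' x'0.
have w_steep : 1 < derive1 G w.
  apply: (lt_le_trans x'y); apply: le_trans _ (right_slopes y ltac:(lra) y0).
  by apply: (slope_nonincr_l G_concave_chord); lra.
have [steep _] := d_spec.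
have Lw0 : L < w < 0 by apply/andP; split; lra.
have [_ _ flat] := steep (ex_intro _ w (conj Lw0 (conj Gw w_steep))).
by have := flat w ltac:(lra) Gw; rewrite leNgt w_steep.
Qed.

Lemma G_slope_ge1 [y] : L <= y -> y < d -> d - y <= G d - G y.
Proof.
move=> Ly yd; have [d0 steep] := steep_left_of_d (le_lt_trans Ly yd).
rewrite leNgt; apply/negP => flat_yd.
set D := d - y - (G d - G y).
have D0 : 0 < D by rewrite /D subr_gt0.
set y' := Num.max ((y + d) / 2) (d - D / 4).
have y'1 : (y + d) / 2 <= y' by rewrite le_max lexx.
have y'2 : d - D / 4 <= y' by rewrite le_max lexx orbT.
have y'd : y' < d by rewrite gt_max; apply/andP; split; lra.
have yy' : y < y' by lra.
have yy'_flat : slope G y y' < 1.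
  have := @G_le_left d y' ltac:(lra) (ltW y'd) (ltW d0).
  have DE : D = d - y - (G d - G y) by [].
  by rewrite /slope ltr_pdivrMr ?subr_gt0 // mul1r; lra.
have [w [/andP[y'w wd] Gw left_slopes _]] :=
  concave_derivable_between G_concave_chord (le_trans Ly (ltW yy')) y'd (ltW d0).
have : derive1 G w < 1.
  apply: le_lt_trans (left_slopes y Ly ltac:(lra)) _.
  by apply: le_lt_trans yy'_flat; apply: (slope_nonincr_r G_concave_chord); lra.
by rewrite ltNge ltW // steep //; apply/andP; split; lra.
Qed.

Lemma lip_envelope_attained x c : (forall y, L <= y <= 0 -> G y - `|x - y| <= c) ->
  (exists2 y, L <= y <= 0 & G y - `|x - y| = c) -> lip_envelope g x = c%:E.
Proof.
move=> ub [y0 y0in attained]; apply/le_anti/andP; split.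
  apply: ge_ereal_sup => _ [y _ <-]; have [yin|yout] := boolP (L <= y <= 0).
    by rewrite gE // -EFinB lee_fin ub.
  by rewrite g_out ?addNye ?leNye //; exact/negP.
by apply: ereal_sup_ubound; exists y0; rewrite // gE // -EFinB attained.
Qed.

Lemma lip_envelope_pos x : 0 < x -> lip_envelope g x = (- x)%:E.
Proof.
move=> x0; apply: lip_envelope_attained.
  move=> y /andP[Ly y0]; have := G_le_opp Ly y0.
  by rewrite ger0_norm; lra.
by exists 0; rewrite ?L_le0 ?lexx // G0 subr0 gtr0_norm // sub0r.
Qed.

Lemma lip_envelope_flat x : L <= x -> d <= x -> x <= 0 -> lip_envelope g x = (G x)%:E.
Proof.
move=> Lx dx x0; apply: lip_envelope_attained; last by exists x; rewrite ?Lx ?x0 // subrr normr0 subr0.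
move=> y /andP[Ly y0]; have [yx|xy] := leP y x.
  by have := G_le_left Ly yx x0; rewrite ger0_norm ?subr_ge0 //; lra.
have := G_slope_le1 Lx dx xy y0.
by rewrite ler0_norm; [lra | rewrite subr_le0 ltW].
Qed.

Lemma lip_envelope_steep x : L <= x -> x < d -> lip_envelope g x = (G d - (d - x))%:E.
Proof.
move=> Lx xd; have [d0 _] := steep_left_of_d (le_lt_trans Lx xd).
have Ld := le_trans Lx (ltW xd).
apply: lip_envelope_attained; last first.
  by exists d; rewrite ?Ld ?(ltW d0) // ltr0_norm ?subr_lt0 // opprB.
move=> y /andP[Ly y0]; have := ler_norm (y - x); rewrite distrC => yx.
have [yd|dy] := ltP y d; first by have := G_slope_ge1 Ly yd; lra.
have [->|dy'] := eqVneq d y; first by lra.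
have dy'' : d < y by rewrite lt_neqAle dy dy'.
by have := G_slope_le1 Ld (lexx d) dy'' y0; lra.
Qed.

Lemma Phi_profile xi x : L <= x ->
  [/\ 0 < x -> Phi gamma mu xi g x
                = ((1 - gamma - x)%:E - mu%:E * maxe (xi - x%:E) 0%E)%E,
      d <= x <= 0 -> Phi gamma mu xi g x
                = ((1 - gamma)%:E + g x - mu%:E * maxe (xi - x%:E) 0%E)%E &
      x < d -> Phi gamma mu xi g x
                = ((1 - gamma)%:E + g d - (d - x)%:E - mu%:E * maxe (xi - x%:E) 0%E)%E].
Proof.
move=> Lx; rewrite PhiE; split.
- by move=> x0; rewrite lip_envelope_pos // Phi_head_addE.
- move=> /andP[dx x0]; rewrite lip_envelope_flat // Phi_head_addE.
  by rewrite gE ?Lx // -EFinD.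
- move=> xd; have [d0 _] := steep_left_of_d (le_lt_trans Lx xd).
  rewrite lip_envelope_steep // Phi_head_addE gE; last by rewrite (le_trans Lx (ltW xd)) ltW.
  by rewrite -EFinD addrA.
Qed.
End TravelingWave.

Theorem corollaryS3p3 (R : realType) (gamma mu : R) (g : R -> \bar R) (L d : R) :
  0 < gamma < 1 -> 0 < mu -> mu != 1 ->
  (exists v : R, traveling_wave gamma mu g v) ->
  concaveE g ->
  L <= 0 ->
  (forall x : R, (0 <= g x)%E <-> L <= x <= 0) ->
  is_d g L d ->
  let s := s_crit gamma mu g in
  forall x : R, L <= x ->
    [/\ 0 < x -> Phi gamma mu s g x
                  = ((1 - gamma - x)%:E - mu%:E * maxe (s - x%:E) 0%E)%E,
        d <= x <= 0 -> Phi gamma mu s g x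
                  = ((1 - gamma)%:E + g x - mu%:E * maxe (s - x%:E) 0%E)%E &
        x < d -> Phi gamma mu s g x
                  = ((1 - gamma)%:E + g d - (d - x)%:E
                     - mu%:E * maxe (s - x%:E) 0%E)%E].
Proof.
move=> _ mu_gt0 _ [v g_wave] g_concave L_le0 g_support d_spec s x Lx.
have wave y : step gamma mu g y = g (y - v).
  by have := g_wave 1%N y; rewrite mul1r.
exact: Phi_profile mu_gt0 L_le0 wave g_concave g_support d_spec s x Lx.
Qed.
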